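(* Let $O_{(4,1)}(x,y,z,w)=x^4z^2w^2+y^4x^2w^2+z^4x^2y^2+w^4y^2z^2-4x^2y^2z^2w^2$, let $0\le a\le1$ and $\alpha,\beta\in\mathbb R$. If $F_1=a\,O_{(4,1)}+x^2yz^2w(\alpha y^2+\beta w^2)$ is positive semidefinite on $\mathbb R^4$, then $\alpha=\beta=0$. *)

From Stdlib Require Import Reals.
Open Scope R_scope.

Definition O41 (x y z w : R) : R :=
  x^4*z^2*w^2 + y^4*x^2*w^2 + z^4*x^2*y^2 + w^4*y^2*z^2 - 4*x^2*y^2*z^2*w^2.

Definition F1 (a alpha beta : R) (x y z w : R) : R :=
  a * O41 x y z w + x^2*y*z^2*w*(alpha*y^2 + beta*w^2).

Definition psd4 (f : R -> R -> R -> R -> R) : Prop :=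
  forall x y z w : R, 0 <= f x y z w.

(* On the line (x, z, w) = (1, 1, 1) the form becomes
   g(y) = a (y^2 - 1)^2 + alpha y^3 + beta y.  Nonnegativity at y = 1 and
   y = -1 forces beta = -alpha, so g(y) = (1 - y^2) (a (1 - y^2) - alpha y).
   For alpha > 0 and y = 2 / (2 + alpha) in (0, 1) the second factor is
   negative because a <= 1 and 1 - y^2 < 2 (1 - y) = alpha y; the case
   alpha < 0 follows by the symmetry y -> -y. *)

From Stdlib Require Import Reals Lra Psatz.
Open Scope R_scope.

Lemma F1_restrict_line (a alpha beta y : R) :
  F1 a alpha beta 1 y 1 1 = a * (y^2 - 1)^2 + alpha * y^3 + beta * y.
Proof. unfold F1, O41; ring. Qed.

Lemma quartic_nonneg_odd_coeffs_opp (a alpha beta : R) :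
  (forall y, 0 <= a * (y^2 - 1)^2 + alpha * y^3 + beta * y) -> beta = - alpha.
Proof.
  intros hg.
  assert (h1 := hg 1); assert (hm1 := hg (-1)).
  lra.
Qed.

Lemma quartic_neg_somewhere (a alpha : R) :
  a <= 1 -> 0 < alpha -> exists y, a * (y^2 - 1)^2 + alpha * (y^3 - y) < 0.
Proof.
  intros ha1 halpha.
  set (y := 2 / (2 + alpha)).
  assert (hy : y * (2 + alpha) = 2) by (unfold y; field; lra).
  assert (y_pos : 0 < y) by (unfold y; apply Rdiv_lt_0_compat; lra).
  assert (y_lt1 : y < 1) by nra.
  assert (gap_pos : 0 < 1 - y^2) by nra.
  assert (gap_lt : 1 - y^2 < alpha * y) by nra.
  exists y.
  replace (a * (y^2 - 1)^2 + alpha * (y^3 - y))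
    with ((1 - y^2) * (a * (1 - y^2) - alpha * y)) by ring.
  apply Rmult_pos_neg; nra.
Qed.

Lemma quartic_nonneg_opp_coeffs_nonpos (a alpha : R) :
  a <= 1 -> (forall y, 0 <= a * (y^2 - 1)^2 + alpha * (y^3 - y)) -> alpha <= 0.
Proof.
  intros ha1 hg.
  destruct (Rle_or_lt alpha 0) as [hle | hgt]; [exact hle |].
  destruct (quartic_neg_somewhere a alpha ha1 hgt) as [y hy].
  specialize (hg y); lra.
Qed.

Theorem lemma3 (a alpha beta : R) (ha0 : 0 <= a) (ha1 : a <= 1)
  (hpsd : psd4 (F1 a alpha beta)) : alpha = 0 /\ beta = 0.
Proof.
  assert (hg : forall y, 0 <= a * (y^2 - 1)^2 + alpha * y^3 + beta * y).
  { intro y; rewrite <- F1_restrict_line; apply hpsd. }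
  assert (hbeta := quartic_nonneg_odd_coeffs_opp a alpha beta hg).
  subst beta.
  assert (alpha_nonpos : alpha <= 0).
  { apply (quartic_nonneg_opp_coeffs_nonpos a alpha ha1).
    intro y; specialize (hg y); lra. }
  assert (alpha_nonneg : - alpha <= 0).
  { apply (quartic_nonneg_opp_coeffs_nonpos a (- alpha) ha1).
    intro y; specialize (hg (- y)); lra. }
  lra.
Qed.
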